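(* Let $A\in\{0,1\}^{N\times n}$ be such that every row has exactly $k$ ones, and let $\mathcal{C}_A=\{\{i\in[n]:A_{ji}=1\}: j\in[N]\}$ be the family of row supports. Suppose $U_1,\dots,U_N,V_1,\dots,V_n\in\mathbb{R}^d$ form a margin-$m$, relative-bias-$0$ embedding of $A$ with $m>0$. Fix $\alpha\in(0,1/2]$ and set $s=\lfloor\alpha k\rfloor$, and assume $s\ge1$. Let $\mathcal{F}_s(A)$ be a family of $s$-element subsets of $[n]$ such that for all distinct $T,T'\in\mathcal{F}_s(A)$, $|T\cap T'|<\frac s2$ and $T\cup T'$ is shattered by $\mathcal{C}_A$. Then $$d\ \ge\ \frac{\log|\mathcal{F}_s(A)|}{\log\bigl(1+\frac{2}{m\sqrt{s}}\bigr)}.$$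
   Context: For $A\in\{0,1\}^{N\times n}$ and $m\ge0$, unit vectors $U_1,\dots,U_N,V_1,\dots,V_n\in\mathbb{R}^d$ form a margin-$m$, relative-bias-$0$ embedding of $A$ if $\langle U_j,V_i\rangle\ge m$ whenever $A_{ji}=1$ and $\langle U_j,V_i\rangle\le -m$ whenever $A_{ji}=0$. A set $B\subseteq[n]$ is shattered by a family $\mathcal{S}$ of subsets of $[n]$ if for every $C\subseteq B$ there is $S'\in\mathcal{S}$ with $S'\cap B=C$. *)

From HB Require Import structures.
From mathcomp Require Import all_boot all_order all_algebra.
From mathcomp Require Import all_classical all_reals all_analysis.
Set Implicit Arguments. Unset Strict Implicit. Unset Printing Implicit Defensive.
Import Order.TTheory GRing.Theory Num.Theory.
Local Open Scope ring_scope.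

Definition dotv (R : realType) (d : nat) (u v : 'rV[R]_d) : R :=
  \sum_(i < d) u 0 i * v 0 i.

Definition unit_vec (R : realType) (d : nat) (u : 'rV[R]_d) : Prop :=
  dotv u u = 1.

Definition margin_embedding (R : realType) (N n d : nat) (A : 'M[bool]_(N, n))
    (m : R) (U : 'I_N -> 'rV[R]_d) (V : 'I_n -> 'rV[R]_d) : Prop :=
  (forall j, unit_vec (U j)) /\ (forall i, unit_vec (V i)) /\
  (forall j i, A j i -> m <= dotv (U j) (V i)) /\
  (forall j i, ~~ A j i -> dotv (U j) (V i) <= - m).

Definition row_supp (N n : nat) (A : 'M[bool]_(N, n)) (j : 'I_N) : {set 'I_n} :=
  [set i | A j i].

Definition row_family (N n : nat) (A : 'M[bool]_(N, n)) : {set {set 'I_n}} :=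
  [set row_supp A j | j : 'I_N].

Definition shattered (n : nat) (S : {set {set 'I_n}}) (B : {set 'I_n}) : Prop :=
  forall C : {set 'I_n}, C \subset B -> exists2 S', S' \in S & S' :&: B = C.

(* Choose, for every T in F, signs making the signed sum x_T of the unit vectors
   V_i, i in T, short: |x_T|^2 <= s.  For T <> T', shattering of T :|: T' yields a
   row U_j whose inner product with V_i has the sign of the i-th coefficient of
   x_T - x_T', so <U_j, x_T - x_T'> >= m (2s - 2|T :&: T'|) > m s.  The x_T are thus
   (m s)-separated points of the ball of radius sqrt s, and a packing bound of
   (1 + 2 rho / delta)^d points gives the claim.  The packing bound avoids volumes:
   a grid count gives a bound with a polynomial loss in 1/delta, and applying it to
   the sums x_(i_0) + t x_(i_1) + ... + t^(k-1) x_(i_(k-1)), t = (1 + 2 rho/delta)^-1,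
   which remain separated, then letting k grow, removes the loss. *)

From HB Require Import structures.
From mathcomp Require Import all_boot all_order all_algebra.
From mathcomp Require Import all_classical all_reals all_analysis.
From mathcomp Require Import ring lra.
Set Implicit Arguments. Unset Strict Implicit. Unset Printing Implicit Defensive.
Import Order.TTheory GRing.Theory Num.Theory.
Local Open Scope ring_scope.

Section EuclideanNorm.
Variables (R : realType) (d : nat).
Implicit Types (u v : 'rV[R]_d) (c : R).

Definition enorm u := Num.sqrt (dotv u u).

Lemma dotv_ge0 u : 0 <= dotv u u.
Proof. by apply: sumr_ge0 => i _; rewrite -expr2 sqr_ge0. Qed.

Lemma dotvDZ u v c :
  dotv (u + c *: v) (u + c *: v) = dotv u u + 2 * c * dotv u v + c ^+ 2 * dotv v v.
Proof.
rewrite /dotv !mulr_sumr -!big_split; apply: eq_bigr => i _; rewrite !mxE /=; ring.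
Qed.

Lemma dotvZ c u : dotv (c *: u) (c *: u) = c ^+ 2 * dotv u u.
Proof. by rewrite /dotv mulr_sumr; apply: eq_bigr => i _; rewrite !mxE; ring. Qed.

Lemma dotv_sumZr (I : finType) (u : 'rV[R]_d) (c : I -> R) (w : I -> 'rV[R]_d) :
  dotv u (\sum_i c i *: w i) = \sum_i c i * dotv u (w i).
Proof.
rewrite /dotv (eq_bigr (fun k => \sum_i c i * (u 0 k * w i 0 k))); last first.
  by move=> k _; rewrite summxE mulr_sumr; apply: eq_bigr => i _; rewrite !mxE; ring.
by rewrite exchange_big; apply: eq_bigr => i _; rewrite mulr_sumr.
Qed.

Lemma sqr_coord_le_dotv u k : u 0 k ^+ 2 <= dotv u u.
Proof.
rewrite /dotv (bigD1 k) //= -expr2 lerDl.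
by apply: sumr_ge0 => i _; rewrite -expr2 sqr_ge0.
Qed.

Lemma dotv_le_coord_bound u h : (forall k, `|u 0 k| <= h) -> dotv u u <= d%:R * h ^+ 2.
Proof.
move=> uh; apply: (le_trans (y := \sum_(k < d) h ^+ 2)).
  apply: ler_sum => k _; rewrite -expr2 -real_normK ?num_real //.
  by apply: lerXn2r; rewrite ?nnegrE ?(le_trans _ (uh k)).
by rewrite sumr_const card_ord mulr_natl.
Qed.

Lemma dotv_CauchySchwarz u v : dotv u v ^+ 2 <= dotv u u * dotv v v.
Proof.
have [v0|vneq0] := eqVneq (dotv v v) 0.
  have vk k : v 0 k = 0.
    by apply/eqP; rewrite -sqrf_eq0 eq_le sqr_ge0 andbT -v0 sqr_coord_le_dotv.
  by rewrite v0 mulr0 /dotv big1 ?expr0n // => k _; rewrite vk mulr0.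
have vpos : 0 < dotv v v by rewrite lt_def vneq0 dotv_ge0.
(* evaluate the quadratic [c |-> dotv (u + c v) (u + c v)] at its minimum *)
have := dotv_ge0 (u + (- (dotv u v / dotv v v)) *: v); rewrite dotvDZ.
have -> : dotv u u + 2 * - (dotv u v / dotv v v) * dotv u v +
    (- (dotv u v / dotv v v)) ^+ 2 * dotv v v =
    (dotv u u * dotv v v - dotv u v ^+ 2) / dotv v v by field.
by rewrite pmulr_lge0 ?invr_gt0 // subr_ge0.
Qed.

Lemma enorm_ge0 u : 0 <= enorm u. Proof. exact: sqrtr_ge0. Qed.

Lemma sqr_enorm u : enorm u ^+ 2 = dotv u u.
Proof. by rewrite sqr_sqrtr // dotv_ge0. Qed.

Lemma enorm0 : enorm 0 = 0.
Proof. by rewrite /enorm /dotv big1 ?sqrtr0 // => k _; rewrite mxE mul0r. Qed.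

Lemma dotv_le_enorm u v : dotv u v <= enorm u * enorm v.
Proof.
apply: (le_trans (ler_norm _)); rewrite -sqrtr_sqr -sqrtrM ?dotv_ge0 //.
exact/ler_wsqrtr/dotv_CauchySchwarz.
Qed.

Lemma enormZ c u : enorm (c *: u) = `|c| * enorm u.
Proof. by rewrite /enorm dotvZ sqrtrM ?sqr_ge0 // sqrtr_sqr. Qed.

Lemma enormN u : enorm (- u) = enorm u.
Proof. by rewrite -scaleN1r enormZ normrN1 mul1r. Qed.

Lemma enormD u v : enorm (u + v) <= enorm u + enorm v.
Proof.
rewrite -[v]scale1r /enorm dotvDZ -/(enorm u) -/(enorm v) scale1r.
rewrite -(ger0_norm (addr_ge0 (enorm_ge0 u) (enorm_ge0 v))) -sqrtr_sqr.
apply: ler_wsqrtr; have := dotv_le_enorm u v.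
rewrite sqrrD -!sqr_enorm expr1n mul1r mulr1; lra.
Qed.

Lemma enormB u v : enorm (u - v) <= enorm u + enorm v.
Proof. by rewrite -(enormN v) enormD. Qed.

Lemma norm_coord_le_enorm u k : `|u 0 k| <= enorm u.
Proof. by rewrite -sqrtr_sqr; apply/ler_wsqrtr/sqr_coord_le_dotv. Qed.

End EuclideanNorm.

Lemma bernoulli_ineq (R : realDomainType) (x : R) (k : nat) :
  0 <= x -> 1 + k%:R * (x - 1) <= x ^+ k.
Proof.
move=> x0; elim: k => [|k IH]; first by rewrite mul0r addr0 expr0.
have step : 1 + k.+1%:R * (x - 1) <= x * (1 + k%:R * (x - 1)).
  have := mulr_ge0 (ler0n R k) (sqr_ge0 (x - 1)); rewrite -natr1; nra.
by rewrite exprS (le_trans step) // ler_wpM2l.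
Qed.

Lemma le1_of_bounded_exprn (R : archiRealFieldType) (x B : R) :
  (forall k, x ^+ k <= B) -> x <= 1.
Proof.
move=> xB; rewrite leNgt; apply/negP => x1.
pose k := (Num.truncn (B / (x - 1))).+1.
have : B < k%:R * (x - 1) by rewrite -ltr_pdivrMr ?subr_gt0 // truncnS_gt.
have := bernoulli_ineq k (ltW (lt_trans ltr01 x1)); have := xB k; lra.
Qed.

Lemma truncn_eq_dist_lt1 (R : archiRealFieldType) (x y : R) :
  0 <= x -> 0 <= y -> Num.truncn x = Num.truncn y -> `|x - y| < 1.
Proof.
move=> /truncn_itv/andP[x1 x2] /truncn_itv/andP[y1 y2] xy.
rewrite xy -natr1 in x1 x2; rewrite -natr1 in y2.
by rewrite ltr_norml; apply/andP; split; lra.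
Qed.

Section Packing.
Variables (R : realType) (d : nat).

Definition separated (I : eqType) (e : R) (x : I -> 'rV[R]_d) :=
  forall i j, i != j -> e < enorm (x i - x j).

Lemma card_separated_le_grid (I : finType) (x : I -> 'rV[R]_d) (a e : R) :
    0 <= a -> 0 < e -> (forall i, enorm (x i) <= a) -> separated e x ->
  #|I|%:R <= (2 * a * d.+1%:R / e + 1) ^+ d.
Proof.
move=> a0 e0 xa xsep.
pose h := e / d.+1%:R; have h0 : 0 < h by rewrite divr_gt0.
have coord_ge0 i k : 0 <= (x i 0 k + a) / h.
  have := le_trans (norm_coord_le_enorm (x i) k) (xa i).
  rewrite ler_norml => /andP[xa1 _]; rewrite divr_ge0 ?(ltW h0) //; lra.
pose L := Num.truncn (2 * a / h).
have idx_le i (k : 'I_d) : (Num.truncn ((x i 0 k + a) / h)%R < L.+1)%N.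
  rewrite ltnS le_truncn // ler_pM2r ?invr_gt0 //.
  have := le_trans (norm_coord_le_enorm (x i) k) (xa i); rewrite ler_norml; lra.
pose cell i : {ffun 'I_d -> 'I_L.+1} :=
  [ffun k => inord (Num.truncn ((x i 0 k + a) / h))].
have cell_inj : injective cell.
  move=> i j cij; suff : enorm (x i - x j) <= e.
    by apply: contraTeq => /xsep; rewrite ltNge.
  have close k : `|(x i - x j) 0 k| <= h.
    have := congr1 (fun f : {ffun 'I_d -> 'I_L.+1} => val (f k)) cij.
    rewrite /= !ffunE !inordK //.
    move=> /(truncn_eq_dist_lt1 (coord_ge0 i k) (coord_ge0 j k)).
    rewrite -mulrBl opprD addrACA subrr addr0 !mxE normrM normfV (gtr0_norm h0) => /ltW.
    by rewrite ler_pdivrMr // mul1r.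
  rewrite -(ger0_norm (ltW e0)) -sqrtr_sqr; apply: ler_wsqrtr.
  apply: le_trans (dotv_le_coord_bound close) _.
  rewrite /h expr_div_n mulrA ler_pdivrMr ?exprn_gt0 ?ltr0n // mulrC.
  by rewrite ler_wpM2l ?sqr_ge0 // -natrX ler_nat (leq_trans (leqnSn d)) // expnS leq_pmulr.
have := leq_card cell cell_inj; rewrite card_ffun !card_ord -(ler_nat R) natrX.
move=> /le_trans; apply; apply: lerXn2r; rewrite ?nnegrE ?ler0n //.
  by rewrite addr_ge0 ?divr_ge0 ?mulr_ge0 ?ler0n ?(ltW e0).
have -> : 2 * a * d.+1%:R / e = 2 * a / h by rewrite /h invf_div mulrA.
rewrite -natr1 lerD2r truncn_le; apply: divr_ge0 (ltW h0); exact: mulr_ge0.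
Qed.

Lemma separated_pair_sum (I J : eqType) (x : I -> 'rV[R]_d) (y : J -> 'rV[R]_d)
    (delta e a t e' : R) :
    0 < t -> separated delta x -> separated e y -> (forall j, enorm (y j) <= a) ->
    e' <= delta - 2 * t * a -> e' <= t * e ->
  separated e' (fun ij : I * J => x ij.1 + t *: y ij.2).
Proof.
move=> t0 xsep ysep ya e'1 e'2 [i j] [i' j'] /=; have [<-|ii'] := eqVneq i i'.
  rewrite xpair_eqE eqxx /= => /ysep jj'.
  rewrite opprD addrACA subrr add0r -scalerBr enormZ gtr0_norm //.
  by rewrite (le_lt_trans e'2) // ltr_pM2l.
move=> _; have := xsep _ _ ii'.
have -> : x i - x i' = (x i + t *: y j - (x i' + t *: y j')) + t *: (y j' - y j).
  by rewrite scalerBr; apply/rowP => k; rewrite !mxE; ring.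
move=> /lt_le_trans/(_ (enormD _ _)); rewrite enormZ gtr0_norm //.
have := ler_wpM2l (ltW t0) (le_trans (enormB (y j') (y j)) (lerD (ya j') (ya j))).
lra.
Qed.

(* The points are the sums [x i_0 + t x i_1 + ... + t^(k-1) x i_(k-1)], indexed by [I^k]. *)
Lemma separated_tensor_power (I : finType) (x : I -> 'rV[R]_d) (rho delta t : R)
    (k : nat) :
    0 <= rho -> 0 < delta -> 0 < t -> t * (delta + 2 * rho) = delta ->
    (forall i, enorm (x i) <= rho) -> separated delta x ->
  exists (J : finType) (y : J -> 'rV[R]_d) (a : R),
    [/\ #|J| = (#|I| ^ k)%N, 0 <= a, 2 * t * a <= delta - delta * t ^+ k,
        forall j, enorm (y j) <= a & separated (delta * t ^+ k) y].
Proof.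
move=> rho0 delta0 t0 t_def xrho xsep.
have t1 : t <= 1 by rewrite -(ler_pM2r delta0) mul1r; nra.
elim: k => [|k [J [y [a [cardJ a0 at_k ya ysep]]]]].
  exists unit, (fun=> 0), 0; split=> //; first by rewrite card_unit.
    by rewrite mulr0 expr0 mulr1 subrr.
  by move=> _; rewrite enorm0.
have tk0 : 0 <= t ^+ k by rewrite exprn_ge0 ?ltW.
exists (I * J)%type, (fun ij => x ij.1 + t *: y ij.2), (rho + t * a); split.
- by rewrite card_prod cardJ expnS.
- by rewrite addr_ge0 ?mulr_ge0 ?(ltW t0).
- have := ler_wpM2l (ltW t0) at_k; rewrite exprS; nra.
- move=> [i j] /=; apply: le_trans (enormD _ _) _.
  by rewrite enormZ gtr0_norm // lerD // ler_wpM2l ?(ltW t0).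
apply: separated_pair_sum xsep ysep ya _ _ => //; last by rewrite exprS mulrCA.
have := ler_wpM2l (ltW delta0) (ler_piMl tk0 t1); rewrite exprS; lra.
Qed.

Lemma card_separated_le (I : finType) (x : I -> 'rV[R]_d) (rho delta : R) :
    0 <= rho -> 0 < delta -> (forall i, enorm (x i) <= rho) -> separated delta x ->
  #|I|%:R <= (1 + 2 * rho / delta) ^+ d.
Proof.
move=> rho0 delta0 xrho xsep; set q := 1 + 2 * rho / delta.
have q1 : 1 <= q by rewrite lerDl divr_ge0 ?mulr_ge0 ?(ltW delta0).
have q0 : 0 < q := lt_le_trans ltr01 q1.
pose t := q^-1; have t0 : 0 < t by rewrite invr_gt0.
have t_def : t * (delta + 2 * rho) = delta.
  by rewrite /t /q; field; rewrite gt_eqF //= gt_eqF //; lra.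
pose C := q * d.+1%:R + 1.
have bound k : ((#|I| ^ k)%:R : R) <= (C * q ^+ k) ^+ d.
  have [J [y [a [cardJ a0 at_k ya ysep]]]] :=
    separated_tensor_power k rho0 delta0 t0 t_def xrho xsep.
  have tk0 : 0 < t ^+ k by rewrite exprn_gt0.
  have e0 : 0 < delta * t ^+ k by rewrite mulr_gt0.
  rewrite -cardJ; apply: le_trans (card_separated_le_grid a0 e0 ya ysep) _.
  have qk1 : 1 <= q ^+ k := exprn_ege1 k q1.
  apply: lerXn2r; rewrite ?nnegrE.
  - by rewrite addr_ge0 // divr_ge0 ?(ltW e0) // !mulr_ge0.
  - by rewrite mulr_ge0 ?(le_trans ler01 qk1) // addr_ge0 // mulr_ge0 ?(ltW q0).
  have a_le : 0 <= q - 2 * a / delta.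
    rewrite subr_ge0 (_ : 2 * a / delta = q * (2 * t * a) / delta); last first.
      by rewrite /t; field; rewrite gt_eqF //= gt_eqF.
    rewrite ler_pdivrMr // ler_wpM2l ?(ltW q0) //; apply: le_trans at_k _.
    have := mulr_ge0 (ltW delta0) (ltW tk0); lra.
  have := mulr_ge0 a_le (mulr_ge0 (ler0n R d.+1) (le_trans ler01 qk1)).
  rewrite /C /t exprVn invfM invrK; lra.
have qd0 : 0 < q ^+ d by rewrite exprn_gt0.
rewrite -[q ^+ d]mul1r -ler_pdivrMr //.
apply: (@le1_of_bounded_exprn _ _ (C ^+ d)) => k.
by rewrite expr_div_n ler_pdivrMr ?exprn_gt0 // -natrX exprAC -exprMn bound.
Qed.

End Packing.

Section SignedSums.
Variables (R : realType) (d : nat) (I : finType) (V : I -> 'rV[R]_d).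
Hypothesis V_unit : forall i, unit_vec (V i).

(* Choose each new sign against the running sum, so the cross term is never positive. *)
Lemma exists_short_signed_sum_seq (r : seq I) : uniq r ->
  exists sg : I -> R, (forall i, `|sg i| = 1) /\
    dotv (\sum_(i <- r) sg i *: V i) (\sum_(i <- r) sg i *: V i) <= (size r)%:R.
Proof.
elim: r => [_|i r IH /= /andP[ir ur]].
  exists (fun=> 1); split=> [i|]; first exact: normr1.
  by rewrite big_nil -(scale0r 0) dotvZ expr0n mul0r.
have [sg [sg1 sg_le]] := IH ur; set y := \sum_(j <- r) _ in sg_le.
pose c : R := if dotv y (V i) <= 0 then 1 else -1.
have c_dot : c * dotv y (V i) <= 0.
  by rewrite /c; case: ifP => [|/negbT]; rewrite ?mul1r // -ltNge mulN1r oppr_le0 => /ltW.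
exists (fun j => if j == i then c else sg j); split.
  by move=> j; case: eqP => // _; rewrite /c; case: ifP; rewrite ?normrN normr1.
rewrite big_cons eqxx (eq_big_seq (fun j => sg j *: V j)) => [|j jr]; last first.
  by case: eqP jr ir => // ->->.
rewrite addrC -/y dotvDZ V_unit -natr1 mulr1 -[c ^+ 2]real_normK ?num_real //.
have -> : `|c| = 1 by rewrite /c; case: ifP; rewrite ?normrN normr1.
rewrite expr1n; lra.
Qed.

Lemma exists_short_signed_sum (T : {set I}) :
  exists sg : I -> R, (forall i, `|sg i| = 1) /\
    dotv (\sum_(i in T) sg i *: V i) (\sum_(i in T) sg i *: V i) <= #|T|%:R.
Proof.
have [sg [sg1 sg_le]] := exists_short_signed_sum_seq (enum_uniq (mem T)).
by exists sg; rewrite cardE -!big_enum.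
Qed.

End SignedSums.

Lemma signed_indicator_diff_sum_ge (R : realType) (I : finType) (T T' : {set I})
    (sg sg' : I -> R) : (forall i, `|sg i| = 1) -> (forall i, `|sg' i| = 1) ->
  (#|T| + #|T'|)%:R - 2 * #|T :&: T'|%:R <=
    \sum_i `|(i \in T)%:R * sg i - (i \in T')%:R * sg' i|.
Proof.
move=> sg1 sg'1.
have card_sum (S : {set I}) : #|S|%:R = \sum_i ((i \in S)%:R : R).
  by rewrite -sumr_const big_mkcond; apply: eq_bigr => i _; case: (i \in S).
rewrite natrD !card_sum -big_split mulr_sumr -sumrB; apply: ler_sum => i _.
have := sg1 i; have := sg'1 i; have := normr_ge0 (sg i - sg' i).
rewrite finset.in_setI; case: (i \in T); case: (i \in T') => /=;
  rewrite ?(mul1r, mul0r, subr0, sub0r, addr0, normrN, normr0, oppr0); lra.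
Qed.

Section ShatteredRows.
Variables (R : realType) (N n d : nat) (A : 'M[bool]_(N, n)) (m : R).
Variables (U : 'I_N -> 'rV[R]_d) (V : 'I_n -> 'rV[R]_d).
Hypothesis emb : margin_embedding A m U V.

(* Shattering provides a row whose support is exactly the positive part of [c] on [B]. *)
Lemma shattered_sign_row (B : {set 'I_n}) (c : 'I_n -> R) :
    shattered (row_family A) B -> (forall i, c i != 0 -> i \in B) ->
  exists j, forall i, m * `|c i| <= c i * dotv (U j) (V i).
Proof.
move=> shB cB; have [_ [_ [A1 A0]]] := emb.
have [|S' /imsetP[j _ ->] S'B] := shB [set i in B | 0 < c i].
  by apply/fintype.subsetP => i; rewrite inE => /andP[].
exists j => i; have [c_neg|c_pos|->] := ltgtP (c i) 0; last by rewrite normr0 mulr0 mul0r.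
- have : i \notin row_supp A j :&: B by rewrite S'B inE ltNge (ltW c_neg) andbF.
  rewrite inE (cB _ (ltr0_neq0 c_neg)) andbT inE => /A0 dot_le.
  by rewrite ltr0_norm // mulrN -mulNr mulrC (ler_wnM2l (ltW c_neg) dot_le).
- have : i \in row_supp A j :&: B by rewrite S'B inE c_pos cB ?gt_eqF.
  rewrite inE => /andP[]; rewrite inE => /A1 dot_ge _.
  by rewrite gtr0_norm // mulrC (ler_wpM2l (ltW c_pos) dot_ge).
Qed.

Lemma shattered_combination_enorm_ge (B : {set 'I_n}) (c : 'I_n -> R) :
    shattered (row_family A) B -> (forall i, c i != 0 -> i \in B) ->
  m * \sum_i `|c i| <= enorm (\sum_i c i *: V i).
Proof.
move=> shB cB; have [j cdot] := shattered_sign_row shB cB.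
have [U1 _] := emb; have U1j : enorm (U j) = 1 by rewrite /enorm U1 sqrtr1.
apply: le_trans (le_trans (dotv_le_enorm (U j) _) _); last by rewrite U1j mul1r.
by rewrite dotv_sumZr mulr_sumr; apply: ler_sum.
Qed.

Lemma signed_sum_diff_enorm_gt (s : nat) (T T' : {set 'I_n}) (sg sg' : 'I_n -> R) :
    0 < m -> (forall i, `|sg i| = 1) -> (forall i, `|sg' i| = 1) ->
    #|T| = s -> #|T'| = s -> #|T :&: T'|%:R < s%:R / 2 :> R ->
    shattered (row_family A) (T :|: T') ->
  m * s%:R < enorm (\sum_(i in T) sg i *: V i - \sum_(i in T') sg' i *: V i).
Proof.
move=> m0 sg1 sg'1 cardT cardT' cap shT.
pose c i := (i \in T)%:R * sg i - (i \in T')%:R * sg' i.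
have -> : \sum_(i in T) sg i *: V i - \sum_(i in T') sg' i *: V i = \sum_i c i *: V i.
  rewrite big_mkcond [X in _ - X]big_mkcond -sumrB.
  apply: eq_bigr => i _; rewrite /c scalerBl -!scalerA.
  by case: (i \in T); case: (i \in T'); rewrite ?scale1r ?scale0r.
apply: lt_le_trans (shattered_combination_enorm_ge shT _); last first.
  move=> i; rewrite /c finset.in_setU.
  by case: (i \in T); case: (i \in T'); rewrite //= !mul0r subrr eqxx.
rewrite ltr_pM2l //; apply: lt_le_trans (signed_indicator_diff_sum_ge T T' sg1 sg'1).
by rewrite cardT cardT' natrD; lra.
Qed.

End ShatteredRows.

Lemma ln_div_ln_le (R : realType) (M q : R) (d : nat) :
  1 < q -> 0 <= M -> M <= q ^+ d -> ln M / ln q <= d%:R.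
Proof.
move=> q1 M0 Mq; have lnq : 0 < ln q := ln_gt0 q1.
rewrite ler_pdivrMr // mulr_natl -lnXn ?(lt_trans ltr01) //.
have [->|M_neq0] := eqVneq M 0; first by rewrite ln0 // ln_ge0 // exprn_ege1 // ltW.
have qd0 : 0 < q ^+ d := exprn_gt0 d (lt_trans ltr01 q1).
by rewrite ler_ln ?posrE // lt_def M_neq0.
Qed.

Unset Implicit Arguments.
Set Strict Implicit.

Theorem theoremF1 (R : realType) (N n d k : nat) (A : 'M[bool]_(N, n))
    (U : 'I_N -> 'rV[R]_d) (V : 'I_n -> 'rV[R]_d) (m alpha : R) (s : nat)
    (F : {set {set 'I_n}}) :
  (forall j : 'I_N, #|row_supp A j| = k) ->
  0 < m ->
  margin_embedding A m U V ->
  0 < alpha -> alpha <= 1 / 2 ->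
  (s%:Z = Num.floor (alpha * k%:R))%R ->
  (1 <= s)%N ->
  (forall T, T \in F -> #|T| = s) ->
  (forall T T', T \in F -> T' \in F -> T != T' ->
     (#|T :&: T'|%:R < s%:R / 2 :> R) /\ shattered (row_family A) (T :|: T')) ->
  ln (#|F|%:R : R) / ln (1 + 2 / (m * Num.sqrt (s%:R))) <= d%:R.
Proof.
move=> _ m0 emb _ _ _ s1 Fs Fsep.
have s0 : 0 < s%:R :> R by rewrite ltr0n.
have [_ [V1 _]] := emb.
have [sg sgP] := choice (exists_short_signed_sum V1).
pose x (T : {T : {set 'I_n} | T \in F}) := \sum_(i in val T) sg (val T) i *: V i.
have x_le T : enorm (x T) <= Num.sqrt s%:R.
  by apply: ler_wsqrtr; rewrite -(Fs _ (valP T)); case: (sgP (val T)).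
have x_sep : separated (m * s%:R) x.
  move=> [T TF] [T' T'F] TT'; have {}TT' : T != T'.
    by apply: contraNneq TT' => eqT; apply/eqP/val_inj.
  have [cap shT] := Fsep T T' TF T'F TT'.
  have [sg1 _] := sgP T; have [sg1' _] := sgP T'.
  exact (signed_sum_diff_enorm_gt emb m0 sg1 sg1' (Fs _ TF) (Fs _ T'F) cap shT).
have := card_separated_le (sqrtr_ge0 _) (mulr_gt0 m0 s0) x_le x_sep.
rewrite card_sig; set r := Num.sqrt s%:R; have r0 : 0 < r by rewrite sqrtr_gt0.
have -> : 2 * r / (m * s%:R) = 2 / (m * r).
  by rewrite -(sqr_sqrtr (ltW s0)) -/r; field; rewrite !gt_eqF.
by apply: ln_div_ln_le; rewrite ?ler0n // ltrDl divr_gt0 ?mulr_gt0.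
Qed.
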